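(* Suppose $|\mathit{Obs}|>1$ and $m\ge2$, and assume also $|\mathit{Obs}|\le m$ so that the class $\mathcal C$ below is nonempty. Let $\mathcal C$ be the class of $m$-agent models in which every observation $o\in\mathit{Obs}$ is the initial observation $\vec o_{\iota,a}$ of at least one agent $a$. Then there is a CTL*KΔ$_m$ formula $\varphi$ such that no CTL*K$_m$ formula $\varphi'$ satisfies: for every $M\in\mathcal C$, $M\models\varphi$ iff $M\models\varphi'$.
   Context: Fix a countably infinite set $\mathit{AP}$ of atomic propositions, a finite nonempty set $\mathit{Obs}$ of observations, and a finite set of agents $\mathit{Ag}=\{a_1,\dots,a_m\}$. For a word $w$ we write $w_i$ for its letter at position $i$ (positions start at $0$), $w_{\le i}$ for its prefix ending at position $i$, $|w|$ for its length (finite words) and $\mathit{last}(w)$ for its last letter; $w\preceq w'$ means $w$ is a prefix of $w'$. Syntax of CTL*KΔ$_m$: history formulas $\varphi::=p\mid\neg\varphi\mid\varphi\wedge\varphi\mid\mathbf A\psi\mid\mathbf K_a\varphi\mid\Delta^{o}_a\varphi$ and path formulas $\psi::=\varphi\mid\neg\psi\mid\psi\wedge\psi\mid\mathbf X\psi\mid\psi\,\mathbf U\,\psi$, with $p\in\mathit{AP}$, $a\in\mathit{Ag}$, $o\in\mathit{Obs}$; formulas are history formulas. CTL*K$_m$ is the fragment of formulas containing no operator $\Delta^o_a$. A multiagent model is $M=(\mathit{AP}_f,S,T,V,\{\sim_o\}_{o\in\mathit{Obs}},s_\iota,\vec o_\iota)$ where $\mathit{AP}_f\subseteq\mathit{AP}$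 is finite, $S$ is a finite set of states, $T\subseteq S\times S$ is left-total, $V:S\to2^{\mathit{AP}_f}$, each $\sim_o$ is an equivalence relation on $S$, $s_\iota\in S$, and $\vec o_\iota=(\vec o_{\iota,a})_{a\in\mathit{Ag}}\in\mathit{Obs}^{\mathit{Ag}}$ gives each agent an initial observation. Paths are infinite sequences of states $s_0s_1\dots$ with $s_iTs_{i+1}$ (starting anywhere); histories are finite nonempty prefixes of paths. An observation record is a finite word over $\mathit{Obs}\times\mathbb N$; $r_{=n}$ is the subword of $r$ consisting of the pairs with second component $n$. A record tuple is $\vec r=(\vec r_a)_{a\in\mathit{Ag}}$; $\vec r\cdot(o,n)_a$ is $\vec r$ with $\vec r_a$ replaced by $\vec r_a\cdot(o,n)$; $\vec\epsilon$ is the tuple of empty records. For agent $a$: $\mathit{ol}_a(\vec r,0)=\vec o_{\iota,a}\cdot o_1\cdots o_k$ if $(\vec r_a)_{=0}=(o_1,0)\cdots(o_k,0)$, and $\mathit{ol}_a(\vec r,n+1)=\mathit{last}(\mathit{ol}_a(\vec r,n))\cdot o_1\cdots o_k$ if $(\vec r_a)_{=n+1}=(o_1,n+1)\cdots(o_k,n+1)$. $h\approx^{\vec r}_a h'$ iff $|h|=|h'|$ and for all $i<|h|$ and all $o$ in $\mathit{ol}_a(\vec r,i)$, $h_i\sim_o h'_i$. Natural semantics: $h,\vec r\models p$ iff $p\in V(\mathit{last}(h))$; negation and conjunction as usual; $h,\vec r\models\mathbf A\psi$ iff for all paths $\pi$ with $h\preceq\pi$, $\pi,|h|-1,\vec r\models\psi$;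 $h,\vec r\models\mathbf K_a\varphi$ iff $h',\vec r\models\varphi$ for all histories $h'\approx^{\vec r}_a h$; $h,\vec r\models\Delta^o_a\varphi$ iff $h,\vec r\cdot(o,|h|-1)_a\models\varphi$; $\pi,n,\vec r\models\varphi$ iff $\pi_{\le n},\vec r\models\varphi$; negation and conjunction as usual; $\pi,n,\vec r\models\mathbf X\psi$ iff $\pi,n+1,\vec r\models\psi$; $\pi,n,\vec r\models\psi_1\mathbf U\psi_2$ iff there is $m'\ge n$ with $\pi,m',\vec r\models\psi_2$ and $\pi,j,\vec r\models\psi_1$ for all $n\le j<m'$. $M\models\varphi$ iff $s_\iota,\vec\epsilon\models\varphi$ ($s_\iota$ viewed as a one-state history). *)

From HB Require Import structures.
From mathcomp Require Import all_boot.
Unset Printing Implicit Defensive.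

Section Syntax.
Variables (Obs : finType) (m : nat).

Inductive hform : Type :=
| HAtom  : nat -> hform
| HNeg   : hform -> hform
| HAnd   : hform -> hform -> hform
| HA     : pform -> hform
| HK     : 'I_m -> hform -> hform
| HDelta : 'I_m -> Obs -> hform -> hform
with pform : Type :=
| PHist  : hform -> pform
| PNeg   : pform -> pform
| PAnd   : pform -> pform -> pform
| PX     : pform -> pform
| PU     : pform -> pform -> pform.

Fixpoint hdelta_free (f : hform) : bool :=
  match f with
  | HAtom _ => true
  | HNeg f1 => hdelta_free f1
  | HAnd f1 f2 => hdelta_free f1 && hdelta_free f2
  | HA p => pdelta_free p
  | HK _ f1 => hdelta_free f1
  | HDelta _ _ _ => false
  end
with pdelta_free (p : pform) : bool :=
  match p with
  | PHist f => hdelta_free f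
  | PNeg p1 => pdelta_free p1
  | PAnd p1 p2 => pdelta_free p1 && pdelta_free p2
  | PX p1 => pdelta_free p1
  | PU p1 p2 => pdelta_free p1 && pdelta_free p2
  end.

End Syntax.
Arguments HAtom {Obs m}. Arguments HNeg {Obs m}. Arguments HAnd {Obs m}. Arguments HA {Obs m}. Arguments HK {Obs m}. Arguments HDelta {Obs m}.
Arguments PHist {Obs m}. Arguments PNeg {Obs m}. Arguments PAnd {Obs m}. Arguments PX {Obs m}. Arguments PU {Obs m}.
Arguments hdelta_free {Obs m}. Arguments pdelta_free {Obs m}.

Record model (Obs : finType) (m : nat) : Type := Model {
  st : finType;
  APf : seq nat;
  trans : rel st;
  val : st -> pred nat;
  sim : Obs -> rel st;
  s_init : st;
  o_init : 'I_m -> Obs;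
  trans_total : forall s, exists s', trans s s';
  val_fin : forall s p, val s p -> p \in APf;
  sim_refl : forall o s, sim o s s;
  sim_sym : forall o s t, sim o s t -> sim o t s;
  sim_trans : forall o s t u, sim o s t -> sim o t u -> sim o s u
}.
Arguments st {Obs m}. Arguments APf {Obs m}. Arguments trans {Obs m}.
Arguments val {Obs m}. Arguments sim {Obs m}. Arguments s_init {Obs m}.
Arguments o_init {Obs m}.

Definition rtuple (Obs : finType) (m : nat) := 'I_m -> seq (Obs * nat).
Definition rt_empty (Obs : finType) (m : nat) : rtuple Obs m := fun _ => [::].
Arguments rt_empty {Obs m}.

Definition rt_add (Obs : finType) (m : nat) (r : rtuple Obs m) (a : 'I_m)
  (o : Obs) (n : nat) : rtuple Obs m :=
  fun b => if b == a then rcons (r b) (o, n) else r b.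
Arguments rt_add {Obs m}.


Section Semantics.
Variables (Obs : finType) (m : nat) (M : model Obs m).
Local Notation S := (st M).

Definition obs_at (r : rtuple Obs m) (a : 'I_m) (n : nat) : seq Obs :=
  [seq x.1 | x <- r a & x.2 == n].

Fixpoint ol (r : rtuple Obs m) (a : 'I_m) (n : nat) : seq Obs :=
  match n with
  | 0 => o_init M a :: obs_at r a 0
  | n'.+1 => last (o_init M a) (ol r a n') :: obs_at r a n'.+1
  end.

Definition is_hist (h : seq S) : bool :=
  if h is x :: t then path (trans M) x t else false.

Definition is_path (pi : nat -> S) : Prop := forall i, trans M (pi i) (pi i.+1).

Definition hist_prefix (h : seq S) (pi : nat -> S) : Prop :=
  forall i, i < size h -> nth (s_init M) h i = pi i.

Definition approx (r : rtuple Obs m) (a : 'I_m) (h h' : seq S) : Prop :=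
  size h = size h' /\
  forall i, i < size h -> forall o, o \in ol r a i ->
    sim M o (nth (s_init M) h i) (nth (s_init M) h' i).

Fixpoint hsat (h : seq S) (r : rtuple Obs m) (f : hform Obs m) {struct f} : Prop :=
  match f with
  | HAtom p => val M (last (s_init M) h) p
  | HNeg f1 => ~ hsat h r f1
  | HAnd f1 f2 => hsat h r f1 /\ hsat h r f2
  | HA p => forall pi, is_path pi -> hist_prefix h pi -> psat pi (size h).-1 r p
  | HK a f1 => forall h', is_hist h' -> approx r a h' h -> hsat h' r f1
  | HDelta a o f1 => hsat h (rt_add r a o (size h).-1) f1
  end
with psat (pi : nat -> S) (n : nat) (r : rtuple Obs m) (p : pform Obs m) {struct p} : Prop :=
  match p with
  | PHist f => hsat (mkseq pi n.+1) r f
  | PNeg p1 => ~ psat pi n r p1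
  | PAnd p1 p2 => psat pi n r p1 /\ psat pi n r p2
  | PX p1 => psat pi n.+1 r p1
  | PU p1 p2 => exists k, n <= k /\ psat pi k r p2 /\
                  forall j, n <= j -> j < k -> psat pi j r p1
  end.

Definition msat (f : hform Obs m) : Prop := hsat [:: s_init M] rt_empty f.

End Semantics.
Arguments msat {Obs m}.

Definition in_classC (Obs : finType) (m : nat) (M : model Obs m) : Prop :=
  forall o : Obs, exists a : 'I_m, o_init M a = o.
Arguments in_classC {Obs m}.

(* With empty observation records an agent only ever uses its single initial
   observation.  Take two models with only self-loops: in the first the state is
   a pair of bits (x, y), the proposition 0 holds when y = false, one observation
   reveals x and another reveals x xor y; in the second the state is the bit y
   alone and nobody observes anything.  Projection to y is a bisimulation for
   single-observation knowledge, because no single observation gives away y, so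
   Delta-free formulas cannot tell the models apart.  But an agent that starts
   with the first observation and is then granted the second one learns y, so
   [Delta^{o2}_a K_a 0] holds in the first model and fails in the second. *)

From Pilot Require Import Defs.
From mathcomp Require Import all_boot.

Set Implicit Arguments.
Unset Strict Implicit.
Unset Printing Implicit Defensive.

Scheme hform_mut := Induction for hform Sort Prop
  with pform_mut := Induction for pform Sort Prop.

Arguments hsat {Obs m}. Arguments psat {Obs m}. Arguments ol {Obs m}.
Arguments is_hist {Obs m}. Arguments is_path {Obs m}.

Lemma ol_rt_empty (Obs : finType) (m : nat) (M : model Obs m) a i :
  ol M rt_empty a i = [:: o_init M a].
Proof. by elim: i => //= i ->. Qed.

Lemma ol_rt_add_empty (Obs : finType) (m : nat) (M : model Obs m) a o :
  ol M (rt_add rt_empty a o 0) a 0 = [:: o_init M a; o].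
Proof. by rewrite /= /obs_at /rt_add eqxx. Qed.

Lemma path_eq_nseq (T : eqType) (x : T) (s : seq T) :
  path eq_op x s = (s == nseq (size s) x).
Proof.
elim: s x => [|y s IHs] x //=; rewrite IHs eqseq_cons eq_sym.
by case: eqP => // ->.
Qed.

Section StaticModel.

Variables (Obs : finType) (m : nat) (M : model Obs m).
Hypothesis trans_eq : forall s t, trans M s t = (s == t).

Lemma static_path_const pi : is_path M pi -> forall i, pi i = pi 0.
Proof. by move=> pi_path; elim=> // i <-; apply/esym/eqP; rewrite -trans_eq. Qed.

Lemma static_histP h : is_hist M h -> exists c n, h = nseq n.+1 c.
Proof.
case: h => [|x s] //=; rewrite (eq_path trans_eq) path_eq_nseq => /eqP ->.
by exists x, (size s).
Qed.

Lemma static_hist_nseq c n : is_hist M (nseq n.+1 c).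
Proof. by rewrite /= (eq_path trans_eq) path_eq_nseq size_nseq. Qed.

Lemma static_path_hist pi n : is_path M pi -> is_hist M (mkseq pi n.+1).
Proof.
move=> pi_path; have -> : mkseq pi n.+1 = nseq n.+1 (pi 0).
  apply: (@eq_from_nth _ (pi 0)); rewrite size_mkseq ?size_nseq // => i i_lt.
  by rewrite nth_mkseq // nth_nseq i_lt (static_path_const pi_path).
exact: static_hist_nseq.
Qed.

End StaticModel.

Section StaticBisimulation.

Variables (Obs : finType) (m : nat) (M N : model Obs m) (f : st M -> st N).
Hypotheses (transM_eq : forall s t, trans M s t = (s == t))
           (transN_eq : forall s t, trans N s t = (s == t)).
Hypothesis f_val : forall s, Defs.val N (f s) =1 Defs.val M s.
Hypothesis f_forth : forall a s t,
  sim M (o_init M a) s t -> sim N (o_init N a) (f s) (f t).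
Hypothesis f_back : forall a s y,
  sim N (o_init N a) y (f s) -> exists2 s', f s' = y & sim M (o_init M a) s' s.

Definition hsat_preserved (phi : hform Obs m) : Prop :=
  forall h, is_hist M h -> (hsat M h rt_empty phi <-> hsat N (map f h) rt_empty phi).

Definition psat_preserved (p : pform Obs m) : Prop :=
  forall pi pi' n, is_path M pi -> (forall i, f (pi i) = pi' i) ->
  (psat M pi n rt_empty p <-> psat N pi' n rt_empty p).

Lemma hsat_preserved_A p : psat_preserved p -> hsat_preserved (HA p).
Proof.
move=> IH h h_hist /=; rewrite size_map.
have [c [n ->]] := static_histP transM_eq h_hist.
split=> [sat_h pi' pi'_path pi'_pre | sat_fh pi pi_path pi_pre].
- have pi'_c i : f c = pi' i.
    by rewrite (static_path_const transN_eq pi'_path) -pi'_pre ?map_nseq.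
  have c_path : is_path M (fun=> c) by move=> i; rewrite /= transM_eq.
  apply/(IH _ _ _ c_path pi'_c); apply: sat_h => // i.
  by rewrite size_nseq nth_nseq => ->.
- apply/(IH pi (f \o pi)) => //; apply: sat_fh => [i|i].
    by move: (pi_path i); rewrite transM_eq transN_eq /= => /eqP ->.
  by rewrite size_map => i_lt; rewrite (nth_map (s_init M)) // pi_pre.
Qed.

Lemma hsat_preserved_K a phi : hsat_preserved phi -> hsat_preserved (HK a phi).
Proof.
move=> IH h h_hist /=; have [c [n h_eq]] := static_histP transM_eq h_hist.
split=> [sat_h h' h'_hist [size_h' sim_h'] | sat_fh h1 h1_hist [size_h1 sim_h1]].
- have [d [n' h'_eq]] := static_histP transN_eq h'_hist.
  have [c' f_c' sim_c'] : exists2 c', f c' = d & sim M (o_init M a) c' c.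
    apply: f_back; have := sim_h' 0 _ (o_init N a).
    by rewrite h'_eq h_eq ol_rt_empty mem_head /=; apply.
  have -> : h' = map f (nseq n.+1 c').
    by move: size_h'; rewrite h'_eq h_eq !map_nseq f_c' !size_nseq => -[->].
  apply/(IH _ (static_hist_nseq transM_eq c' n)); apply: sat_h.
    exact: static_hist_nseq.
  split; first by rewrite h_eq !size_nseq.
  move=> i; rewrite size_nseq ol_rt_empty h_eq => i_lt o /[!inE] /eqP ->.
  by rewrite !nth_nseq i_lt.
- apply/(IH h1 h1_hist); apply: sat_fh.
    have [c1 [n1 ->]] := static_histP transM_eq h1_hist.
    by rewrite map_nseq; apply: static_hist_nseq.
  split=> [|i]; first by rewrite !size_map.
  rewrite size_map ol_rt_empty => i_lt o /[!inE] /eqP ->.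
  have i_lt' : i < size h by rewrite -size_h1.
  rewrite !(nth_map (s_init M)) //; apply: f_forth.
  by apply: sim_h1 => //; rewrite ol_rt_empty mem_head.
Qed.

Lemma psat_preserved_hist phi : hsat_preserved phi -> psat_preserved (PHist phi).
Proof.
move=> IH pi pi' n pi_path f_pi /=.
have -> : mkseq pi' n.+1 = map f (mkseq pi n.+1).
  by rewrite /mkseq -map_comp; apply: eq_map => i; rewrite /= f_pi.
by apply: IH; apply: static_path_hist.
Qed.

Lemma hdelta_free_hsat_preserved phi : hdelta_free phi -> hsat_preserved phi.
Proof.
move: phi; apply: (@hform_mut Obs m _ (fun p => pdelta_free p -> psat_preserved p)).
- by move=> p _ [|x s] // _ /=; rewrite last_map f_val.
- by move=> phi IH free h h_hist; have := IH free h h_hist; rewrite /=; tauto.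
- move=> phi1 IH1 phi2 IH2 /andP[free1 free2] h h_hist /=.
  by have := IH1 free1 h h_hist; have := IH2 free2 h h_hist; tauto.
- by move=> p IH free; apply/hsat_preserved_A/IH.
- by move=> a phi IH free; apply/hsat_preserved_K/IH.
- by [].
- by move=> phi IH free; apply/psat_preserved_hist/IH.
- move=> p IH free pi pi' n pi_path f_pi /=.
  by have := IH free pi pi' n pi_path f_pi; tauto.
- move=> p1 IH1 p2 IH2 /andP[free1 free2] pi pi' n pi_path f_pi /=.
  have := IH1 free1 pi pi' n pi_path f_pi; have := IH2 free2 pi pi' n pi_path f_pi.
  tauto.
- by move=> p IH free pi pi' n; apply: IH.
- move=> p1 IH1 p2 IH2 /andP[free1 free2] pi pi' n pi_path f_pi /=.
  have E1 k := IH1 free1 pi pi' k pi_path f_pi.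
  have E2 k := IH2 free2 pi pi' k pi_path f_pi.
  split=> -[k [n_le [sat2 sat1]]]; exists k; split=> //; split;
    by [apply/E2 | move=> j j_ge j_lt; apply/E1; apply: sat1].
Qed.

End StaticBisimulation.

Section ViewModel.

Variables (Obs : finType) (m : nat) (S : finType).
Variables (view : Obs -> S -> bool) (atom : pred S) (s0 : S) (oi : 'I_m -> Obs).

Definition view_model : model Obs m :=
  @Model Obs m S [:: 0] eq_op (fun s p => (p == 0) && atom s)
    (fun o => [rel s t | view o s == view o t]) s0 oi
    (fun s => ex_intro _ s (eqxx s))
    ltac:(by move=> s p /andP[/eqP ->])
    (fun o s => eqxx _)
    ltac:(by move=> o s t /=; rewrite eq_sym)
    ltac:(by move=> o s t u /= /eqP -> /eqP ->).

End ViewModel.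

Section SharedBit.

Variables (Obs : finType) (m : nat) (oi : 'I_m -> Obs) (o1 o2 : Obs).

(* [o1] and [o2] each see one share of a two-out-of-two xor secret sharing of
   the bit [s.2]. *)
Definition share_view (o : Obs) (s : bool * bool) : bool :=
  if o == o1 then s.1 else if o == o2 then s.1 (+) s.2 else false.

Lemma share_view_hides o s y :
  exists2 s', s'.2 = y & share_view o s' = share_view o s.
Proof.
exists (if o == o1 then s.1 else if o == o2 then s.1 (+) s.2 (+) y else s.1, y).
  by [].
rewrite /share_view; case: (o == o1) => //; case: (o == o2) => //=.
by case: s => [[] []]; case: y.
Qed.

Lemma share_views_inj s t : o2 != o1 ->
  share_view o1 s = share_view o1 t -> share_view o2 s = share_view o2 t -> s = t.
Proof.
rewrite /share_view !eqxx => /negbTE ->.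
by case: s t => [[] []] [[] []].
Qed.

Definition shared_model : model Obs m :=
  view_model share_view (fun s => ~~ s.2) (false, false) oi.

Definition opaque_model : model Obs m :=
  view_model (fun _ _ => false) negb false oi.

Lemma shared_opaque_hdelta_free (phi : hform Obs m) : hdelta_free phi ->
  msat shared_model phi <-> msat opaque_model phi.
Proof.
move=> free; have snd_back a s y : exists2 s', s'.2 = y & sim shared_model (oi a) s' s.
  by have [s' s'_y s'_s] := share_view_hides (oi a) s y; exists s'; rewrite //= s'_s.
exact: (@hdelta_free_hsat_preserved _ _ shared_model opaque_model snd
  (fun _ _ => erefl) (fun _ _ => erefl) (fun _ _ => erefl) (fun _ _ _ _ => erefl)
  (fun a s y _ => snd_back a s y) phi free [:: (false, false)]).
Qed.

Lemma shared_model_Delta_K a : oi a = o1 -> o2 != o1 ->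
  msat shared_model (HDelta a o2 (HK a (HAtom 0))).
Proof.
move=> oi_a o2_new; rewrite /msat /= => -[|x [|y h]] // _ [] // _ sim_x.
have sim_x0 o : o \in [:: o1; o2] -> share_view o x = share_view o (false, false).
  by move=> o_in; apply/eqP; apply: (sim_x 0) => //; rewrite ol_rt_add_empty /= oi_a.
have -> // := share_views_inj o2_new (sim_x0 _ (mem_head _ _)).
by rewrite sim_x0 // !inE eqxx orbT.
Qed.

Lemma opaque_model_not_Delta_K a o :
  ~ msat opaque_model (HDelta a o (HK a (HAtom 0))).
Proof. by rewrite /msat /= => /(_ [:: true] isT (conj erefl (fun _ _ _ _ => erefl))). Qed.

End SharedBit.

Lemma exists_surjection (T : finType) (m : nat) :
  0 < #|T| -> #|T| <= m -> exists f : 'I_m -> T, forall x, exists i, f i = x.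
Proof.
case/card_gt0P => x0 _ card_le; exists (fun i => nth x0 (enum T) i) => x.
have x_idx : index x (enum T) < m.
  by apply: leq_trans card_le; rewrite cardT index_mem mem_enum.
by exists (Ordinal x_idx); rewrite nth_index ?mem_enum.
Qed.

Lemma exists_neq (T : finType) (x : T) : 1 < #|T| -> exists y, y != x.
Proof.
case/card_gt1P => y [z [_ _ y_neq_z]].
by case: (eqVneq y x) => [y_x|]; [exists z; rewrite -y_x eq_sym | exists y].
Qed.

Theorem mainTheorem10 (Obs : finType) (m : nat) :
  1 < #|Obs| -> 2 <= m -> #|Obs| <= m ->
  exists phi : hform Obs m,
    ~ exists phi' : hform Obs m,
        hdelta_free phi' /\
        forall M : model Obs m, in_classC M -> (msat M phi <-> msat M phi').
Proof.
(* [2 <= m] follows from the other two hypotheses. *)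
move=> card_gt1 _ card_le.
have [oi oi_surj] := exists_surjection (ltnW card_gt1) card_le.
have m_gt0 : 0 < m by apply: leq_trans card_le; apply: ltnW.
pose a := Ordinal m_gt0.
have [o2 o2_new] := exists_neq (oi a) card_gt1.
exists (HDelta a o2 (HK a (HAtom 0))) => -[phi' [free equiv_phi']].
have shared_sat := shared_model_Delta_K erefl o2_new.
have opaque_unsat := @opaque_model_not_Delta_K _ _ oi a o2.
have shared_equiv := equiv_phi' (shared_model oi (oi a) o2) oi_surj.
have opaque_equiv := equiv_phi' (opaque_model oi) oi_surj.
have := shared_opaque_hdelta_free oi (oi a) o2 free.
tauto.
Qed.
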